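(* The generating function of $\alpha$-unimodal sets satisfies $$F(q,t,z):=\sum_{n\ge1}\sum_{\alpha\vDash n}\sum_{S\in U_\alpha} q^{|S|}\,t^{\ell(\alpha)}\,z^n = \frac{tz}{1-(1+q)(1+t)z+qz^2}$$ as formal power series.
   Context: A composition $\alpha=(\alpha_1,\dots,\alpha_\ell)$ of $n$ (written $\alpha\vDash n$) is a sequence of positive integers summing to $n$; $\ell(\alpha)=\ell$ is its number of parts. Set $S_\alpha=\{\alpha_1,\alpha_1+\alpha_2,\dots,\alpha_1+\dots+\alpha_{\ell-1}\}\subseteq[n-1]$. The blocks of $\alpha$ are $B_i(\alpha)=\{\alpha_1+\dots+\alpha_{i-1}+1,\dots,\alpha_1+\dots+\alpha_i\}$. A set $S\subseteq[n-1]$ is $\alpha$-unimodal if for every $i$ the set $S\cap(B_i(\alpha)\setminus S_\alpha)$ is an initial segment (in increasing order) of $B_i(\alpha)\setminus S_\alpha$. $U_\alpha$ denotes the set of $\alpha$-unimodal subsets of $[n-1]$. *)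

From HB Require Import structures.
From mathcomp Require Import all_boot all_order all_algebra.
Set Implicit Arguments. Unset Strict Implicit. Unset Printing Implicit Defensive.
Import GRing.Theory.
Local Open Scope ring_scope.

Definition is_composition (n : nat) (a : seq nat) : bool :=
  all (fun x => (0 < x)%N) a && (sumn a == n).

Definition partial_sums (a : seq nat) : seq nat :=
  [seq sumn (take i a) | i <- iota 1 (size a).-1].

(* Block B_(i+1)(alpha) (0-indexed i) = {a_1+..+a_i + 1, ..., a_1+..+a_(i+1)} *)
Definition in_block (a : seq nat) (i x : nat) : bool :=
  ((sumn (take i a) < x) && (x <= sumn (take i.+1 a)))%N.

Definition in_block_free (a : seq nat) (i x : nat) : bool :=
  in_block a i x && (x \notin partial_sums a).

(* S is alpha-unimodal: for every block, S ∩ (B_i \ S_alpha) is an initial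
   segment (in increasing order) of B_i \ S_alpha, i.e. it is downward closed
   within B_i \ S_alpha. All elements of blocks are <= sumn a. *)
Definition unimodal (a : seq nat) (S : pred nat) : bool :=
  all (fun i =>
    all (fun y =>
      all (fun x =>
        [&& (x < y)%N, in_block_free a i x, in_block_free a i y & S y] ==> S x)
      (iota 0 (sumn a).+1))
    (iota 0 (sumn a).+1))
  (iota 0 (size a)).

Definition natset (n : nat) (S : {set 'I_n}) : pred nat :=
  fun x => x \in [seq val i | i in S].

(* Subsets of [n-1] = {1,...,n-1}: sets of 'I_n = {0,...,n-1} avoiding 0. *)
Definition subset_of_range (n : nat) (S : {set 'I_n}) : bool :=
  S \subset [set i : 'I_n | (0 < val i)%N].

(* Coefficient of z^n in F(q,t,z):
   sum over compositions alpha of n (enumerated as tuples of length l <= n with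
   entries < n+1) and over alpha-unimodal S of q^|S| t^l(alpha). *)
Definition unimodal_coef (R : comRingType) (q t : R) (n : nat) : R :=
  \sum_(l < n.+1)
    \sum_(s : l.-tuple 'I_n.+1 | is_composition n (map val s))
      \sum_(S : {set 'I_n} | subset_of_range S && unimodal (map val s) (natset S))
        q ^+ #|S| * t ^+ l.

Definition unimodal_den (R : comRingType) (q t : R) : {poly R} :=
  1 - ((1 + q) * (1 + t)) *: 'X + q *: 'X^2.

From HB Require Import structures.
From mathcomp Require Import all_boot all_order all_algebra.
From mathcomp Require Import zify ring.
Set Implicit Arguments. Unset Strict Implicit. Unset Printing Implicit Defensive.
Import GRing.Theory.

(* Encode a composition alpha of n by the binary word of length n-1 recording
   which positions lie in S_alpha, and a subset S of [n-1] by its indicator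
   word.  Then S is alpha-unimodal iff no position j lying neither in S_alpha
   nor in S is followed by a position j+1 lying in S but not in S_alpha: a
   single forbidden adjacent pattern in the zipped word over bool * bool.
   Hence [z^n] F = t A_(n-1), where A_m is the total weight of the words of
   length m avoiding that pattern, a letter weighing t when it marks a cut and
   q when it marks an element of S.  Splitting off the first letters gives
   A_(m+2) = (1+q)(1+t) A_(m+1) - q A_m, A_0 = 1, A_1 = (1+q)(1+t), which is
   the identity (1 - (1+q)(1+t) z + q z^2) F = t z read coefficientwise. *)

Local Open Scope ring_scope.

Fixpoint words (T : Type) (al : seq T) (m : nat) : seq (seq T) :=
  if m is m'.+1 then [seq x :: u | x <- al, u <- words al m'] else [:: [::]].

Lemma wordsS (T : Type) (al : seq T) m :
  words al m.+1 = [seq x :: u | x <- al, u <- words al m].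
Proof. by []. Qed.

Lemma big_wordsS (R : nmodType) (T : Type) (al : seq T) m (P : pred (seq T))
    (F : seq T -> R) :
  \sum_(u <- words al m.+1 | P u) F u
  = \sum_(x <- al) \sum_(u <- words al m | P (x :: u)) F (x :: u).
Proof.
by rewrite big_mkcond /= big_allpairs_dep; apply: eq_bigr => x _; rewrite -big_mkcond.
Qed.

Lemma mem_words (T : eqType) (al : seq T) m u :
  (u \in words al m) = (size u == m) && all (mem al) u.
Proof.
elim: m u => [|m IH] [|x u] //=; rewrite ?inE //.
  by apply/allpairsPdep => -[y [v [_ _ //]]].
apply/allpairsPdep/idP => [[y [v [yal vin [-> ->]]]]|].
  by move: vin; rewrite IH eqSS => /andP[-> ->]; rewrite yal.
by rewrite eqSS => /and3P[su xal au]; exists x, u; rewrite IH su au xal.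
Qed.

Lemma words_uniq (T : eqType) (al : seq T) m : uniq al -> uniq (words al m).
Proof.
move=> ual; elim: m => [|m IH] //=.
by apply: allpairs_uniq_dep => // -[x1 u1] [x2 u2] _ _ [-> ->].
Qed.

Lemma big_words_zip (R : nmodType) (T1 T2 : Type) (al1 : seq T1) (al2 : seq T2) m
    (F : seq (T1 * T2) -> R) :
  \sum_(u1 <- words al1 m) \sum_(u2 <- words al2 m) F (zip u1 u2)
  = \sum_(u <- words [seq (x1, x2) | x1 <- al1, x2 <- al2] m) F u.
Proof.
elim: m F => [|m IH] F; first by rewrite /= !big_seq1.
rewrite !wordsS !big_allpairs_dep; apply: eq_bigr => x1 _.
under eq_bigr do rewrite big_allpairs_dep.
by rewrite exchange_big; apply: eq_bigr => x2 _; exact: (IH (fun u => F ((x1, x2) :: u))).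
Qed.

Section PatternAvoidance.
Variables (R : comRingType) (T : eqType) (al : seq T) (w : T -> R) (x0 y0 : T).
Hypotheses (al_uniq : uniq al) (x0_al : x0 \in al) (y0_al : y0 \in al)
  (x0_neq_y0 : x0 != y0).

Definition avoid (x y : T) : bool := (x != x0) || (y != y0).

Definition word_weight (u : seq T) : R := \prod_(x <- u) w x.

Definition avoiding_weight_from (x : T) (m : nat) : R :=
  \sum_(u <- words al m | path avoid x u) word_weight u.

Definition avoiding_weight (m : nat) : R :=
  \sum_(u <- words al m | sorted avoid u) word_weight u.

Lemma avoiding_weightS m :
  avoiding_weight m.+1 = \sum_(x <- al) w x * avoiding_weight_from x m.
Proof.
rewrite /avoiding_weight big_wordsS; apply: eq_bigr => x _.
by rewrite mulr_sumr; apply: eq_bigr => u _; rewrite /word_weight big_cons.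
Qed.

Lemma avoiding_weight_fromS x m :
  avoiding_weight_from x m.+1
  = \sum_(y <- al | avoid x y) w y * avoiding_weight_from y m.
Proof.
rewrite /avoiding_weight_from big_wordsS [RHS]big_mkcond; apply: eq_bigr => y _ /=.
case: (avoid x y); last by rewrite big_pred0.
by rewrite mulr_sumr; apply: eq_bigr => u _; rewrite /word_weight big_cons.
Qed.

Lemma avoiding_weight_from_free x m :
  x != x0 -> avoiding_weight_from x m = avoiding_weight m.
Proof. by move=> xx0; apply: eq_bigl => -[|y u] //=; rewrite /avoid xx0. Qed.

Lemma avoiding_weight0 : avoiding_weight 0 = 1.
Proof. by rewrite /avoiding_weight /= big_cons big_nil /word_weight big_nil addr0. Qed.

Lemma avoiding_weight1 : avoiding_weight 1 = \sum_(x <- al) w x.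
Proof.
rewrite avoiding_weightS; apply: eq_bigr => x _.
by rewrite /avoiding_weight_from /= big_cons big_nil /word_weight big_nil addr0 mulr1.
Qed.

(* An avoiding word may continue after [x0] with anything but [y0], and after
   any other letter with anything at all. *)
Lemma avoiding_weightSS m :
  avoiding_weight m.+2
  = (\sum_(x <- al) w x) * avoiding_weight m.+1 - w x0 * w y0 * avoiding_weight m.
Proof.
have from_x0 :
    avoiding_weight_from x0 m.+1 = avoiding_weight m.+1 - w y0 * avoiding_weight m.
  rewrite avoiding_weight_fromS avoiding_weightS [in RHS](bigD1_seq y0) //=.
  rewrite avoiding_weight_from_free 1?eq_sym // addrAC subrr add0r.
  by apply: eq_bigl => y; rewrite /avoid eqxx.
rewrite avoiding_weightS (bigD1_seq x0) //= from_x0 [in RHS](bigD1_seq x0) //=.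
rewrite mulrDl big_distrl /=.
under eq_bigr => x xx0 do rewrite avoiding_weight_from_free //.
ring.
Qed.

End PatternAvoidance.

Local Close Scope ring_scope.

(* [comp_of_word w] is the composition of [(size w).+1] whose partial sums are
   the positions marked in [w]. *)
Fixpoint comp_of_word (w : seq bool) : seq nat :=
  match w with
  | [::] => [:: 1]
  | true :: w' => 1 :: comp_of_word w'
  | false :: w' => if comp_of_word w' is k :: a then k.+1 :: a else [:: 1]
  end.

Fixpoint word_of_comp (a : seq nat) : seq bool :=
  match a with
  | [::] => [::]
  | [:: k] => nseq k.-1 false
  | k :: a' => nseq k.-1 false ++ true :: word_of_comp a'
  end.

(* Positions are numbered from 1: [set_of_word v j.+1 = nth false v j]. *)
Definition set_of_word (v : seq bool) : pred nat := nth false (false :: v).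

Lemma comp_of_word_cons w : exists k a, comp_of_word w = k.+1 :: a.
Proof.
elim: w => [|[] w [k [a IH]]] /=; first by exists 0, [::].
  by exists 0, (k.+1 :: a); rewrite IH.
by exists k.+1, a; rewrite IH.
Qed.

Lemma sumn_comp_of_word w : sumn (comp_of_word w) = (size w).+1.
Proof.
elim: w => [|[] w IH] //=; first by rewrite IH.
by have [k [a E]] := comp_of_word_cons w; move: IH; rewrite E /= => <-.
Qed.

Lemma size_comp_of_word w : size (comp_of_word w) = (count id w).+1.
Proof.
elim: w => [|[] w IH] //=; first by rewrite IH.
by have [k [a E]] := comp_of_word_cons w; move: IH; rewrite E /= => ->.
Qed.

Lemma comp_of_word_pos w : all (fun x => 0 < x) (comp_of_word w).
Proof.
elim: w => [|[] w IH] //=.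
by have [k [a E]] := comp_of_word_cons w; move: IH; rewrite E.
Qed.

Lemma comp_of_wordK : cancel comp_of_word word_of_comp.
Proof.
elim=> [|b w IH] //; have [k [a E]] := comp_of_word_cons w; rewrite E in IH.
by case: b => /=; rewrite E; case: a E IH => [|y a] E /= ->.
Qed.

Lemma comp_of_word_nseq j w k a : comp_of_word w = k :: a ->
  comp_of_word (nseq j false ++ w) = (j + k) :: a.
Proof. by move=> E; elim: j => [|j IH] //=; rewrite IH. Qed.

Lemma word_of_compK a : a != [::] -> all (fun x => 0 < x) a ->
  comp_of_word (word_of_comp a) = a.
Proof.
elim: a => [|k a IH] // _ /= /andP[k_gt0 a_pos].
case: a IH a_pos => [|y a] IH a_pos.
  by rewrite -[nseq _ _]cats0 (@comp_of_word_nseq _ [::] 1 [::]) // addn1 prednK.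
by rewrite (@comp_of_word_nseq _ _ 1 (y :: a)) /= ?IH // addn1 prednK.
Qed.

Lemma partial_sums_cons k a :
  partial_sums (k :: a)
  = if a is [::] then [::] else k :: map (addn k) (partial_sums a).
Proof.
case: a => [|y a] //; rewrite /partial_sums /= addn0; congr (_ :: _).
by rewrite -[2]/(1 + 1) iotaDl -!map_comp; apply: eq_map => i /=.
Qed.

Lemma partial_sums_incr_head k a :
  partial_sums (k.+1 :: a) = map succn (partial_sums (k :: a)).
Proof.
rewrite !partial_sums_cons; case: a => //= y a; rewrite -map_comp.
by congr (_ :: _); apply: eq_map => i /=; rewrite addSn.
Qed.

Lemma mem_partial_sums_comp_of_word w x :
  (x \in partial_sums (comp_of_word w)) = set_of_word w x.
Proof.
have map_pos_ne0 (f : nat -> nat) s : (forall y, 0 < f y) -> 0 \notin map f s.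
  by move=> f_pos; apply/negP; case/mapP => y _ E; have := f_pos y; rewrite -E.
elim: w x => [|b w IH] x; first by case: x => [|[]].
have [k [a E]] := comp_of_word_cons w.
case: b; rewrite /= E.
  rewrite partial_sums_cons -E in_cons; case: x => [|[|x]] //=.
    by apply/negbTE/map_pos_ne0 => y; rewrite add1n.
  by rewrite -[x.+2]add1n (mem_map (@addnI 1)) IH.
rewrite partial_sums_incr_head -E; case: x => [|x] /=.
  exact/negbTE/map_pos_ne0.
by rewrite (mem_map succn_inj) IH.
Qed.

Lemma leq_sumn_take (a : seq nat) i j : i <= j -> sumn (take i a) <= sumn (take j a).
Proof. by move=> /subnKC <-; rewrite takeD sumn_cat leq_addr. Qed.

Lemma mem_partial_sumsP (a : seq nat) x :
  reflect (exists2 j, 0 < j < size a & x = sumn (take j a)) (x \in partial_sums a).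
Proof.
apply: (iffP mapP) => [[j]|[j j_lt ->]].
  by rewrite mem_iota => j_lt ->; exists j => //; case: (size a) j_lt => /=; lia.
by exists j => //; rewrite mem_iota; case: (size a) j_lt => /=; lia.
Qed.

Lemma in_some_block (a : seq nat) x : 0 < x <= sumn a ->
  exists2 i, i < size a & in_block a i x.
Proof.
rewrite /in_block; elim: a x => [|k a IH] x /=; first by lia.
move=> x_range; case: (leqP x k) => x_le_k.
  by exists 0; rewrite //= take0 /=; lia.
by have [|i i_lt] := IH (x - k); [lia | exists i.+1 => //=; lia].
Qed.

Lemma inner_notin_partial_sums (a : seq nat) i z :
  sumn (take i a) < z < sumn (take i.+1 a) -> z \notin partial_sums a.
Proof.
move=> z_inner; apply/mem_partial_sumsP => -[j _ z_eq].
by case: (leqP j i) => ij; have := leq_sumn_take a ij; lia.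
Qed.

Definition locally_unimodal (a : seq nat) (S : pred nat) : bool :=
  all (fun x => [&& x \notin partial_sums a, x.+1 \notin partial_sums a & S x.+1] ==> S x)
    (iota 1 (sumn a).-2).

Lemma eq_unimodal a (S1 S2 : pred nat) : S1 =1 S2 -> unimodal a S1 = unimodal a S2.
Proof.
by move=> S12; apply: eq_all => i; apply: eq_all => y; apply: eq_all => x; rewrite !S12.
Qed.

Lemma unimodal_locally a S : unimodal a S -> locally_unimodal a S.
Proof.
move=> /allP U; apply/allP => x; rewrite mem_iota => x_range.
apply/implyP => /and3P[x_free x1_free S_x1].
have [|i i_lt /[dup] x_in /andP[_ x_le]] := @in_some_block a x; first by lia.
have x1_in : in_block a i x.+1.
  rewrite /in_block ltnS (ltnW (proj1 (andP x_in))) /= ltn_neqAle x_le andbT.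
  apply/eqP => x_end; case: (ltnP i.+1 (size a)) => i1_lt.
    by move/negP: x_free; apply; apply/mem_partial_sumsP; exists i.+1.
  by move: x_end; rewrite take_oversize //; lia.
have := U i; rewrite mem_iota add0n => /(_ i_lt) /allP /(_ x.+1).
rewrite mem_iota => /(_ ltac:(lia)) /allP /(_ x); rewrite mem_iota => /(_ ltac:(lia)).
by rewrite /in_block_free x_in x1_in x_free x1_free S_x1 ltnSn => /implyP; apply.
Qed.

Lemma locally_unimodal_unimodal a S :
  ~~ S (sumn a) -> locally_unimodal a S -> unimodal a S.
Proof.
move=> S_n /allP L; apply/allP => i _; apply/allP => y _; apply/allP => x _.
apply/implyP => /and4P[x_lt_y /andP[/andP[x_gt x_le] _] /andP[/andP[_ y_le] y_free] S_y].
have y_lt_n : y < sumn a.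
  rewrite ltn_neqAle; apply/andP; split; first by apply: contraNneq S_n => <-.
  by apply: leq_trans y_le _; rewrite -{2}(cat_take_drop i.+1 a) sumn_cat leq_addr.
suff S_below d : d <= y - x -> S (y - d).
  by have := S_below _ (leqnn _); rewrite subKn // ltnW.
elim: d => [|d IH] d_le; first by rewrite subn0.
have z_free : y - d.+1 \notin partial_sums a.
  by apply: (@inner_notin_partial_sums _ i); lia.
have z1_free : (y - d.+1).+1 \notin partial_sums a.
  have [z1_lt | z1_ge] := ltnP (y - d.+1).+1 y.
    by apply: (@inner_notin_partial_sums _ i); lia.
  by have -> : (y - d.+1).+1 = y by lia.
have := L (y - d.+1); rewrite mem_iota => /(_ ltac:(lia)) /implyP; apply.
by rewrite z_free z1_free -subSn ?IH //; lia.
Qed.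

(* The hypothesis is needed for the last block only: its last element is not a
   partial sum, so the local condition does not reach it. *)
Lemma unimodalE a S : ~~ S (sumn a) -> unimodal a S = locally_unimodal a S.
Proof.
move=> S_n; apply/idP/idP; first exact: unimodal_locally.
exact: locally_unimodal_unimodal.
Qed.

Lemma locally_unimodal_words w v : size w = size v ->
  locally_unimodal (comp_of_word w) (set_of_word v)
  = sorted (avoid (false, false) (false, true)) (zip w v).
Proof.
move=> size_wv; rewrite /locally_unimodal sumn_comp_of_word.
have letter_step j : j.+1 < size w ->
  ([&& j.+1 \notin partial_sums (comp_of_word w),
       j.+2 \notin partial_sums (comp_of_word w) & set_of_word v j.+2]
   ==> set_of_word v j.+1)
  = avoid (false, false) (false, true) (nth (false, false) (zip w v) j)
      (nth (false, false) (zip w v) j.+1).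
  move=> j_lt; rewrite !mem_partial_sums_comp_of_word /set_of_word /= !nth_zip // /avoid.
  by case: (nth false w j); case: (nth false w j.+1);
    case: (nth false v j); case: (nth false v j.+1).
apply/allP/(sortedP (false, false)) => [L j | S x].
  rewrite size_zip -size_wv minnn => j_lt; rewrite -letter_step // L // mem_iota; lia.
rewrite mem_iota => x_range; have -> : x = x.-1.+1 by lia.
by rewrite letter_step ?S ?size_zip -?size_wv ?minnn; lia.
Qed.

Definition word_of_set m (S : {set 'I_m.+1}) : seq bool :=
  [seq (inord j.+1 : 'I_m.+1) \in S | j <- iota 0 m].

Lemma size_word_of_set m (S : {set 'I_m.+1}) : size (word_of_set S) = m.
Proof. by rewrite size_map size_iota. Qed.

Lemma natsetE m (S : {set 'I_m.+1}) x : natset S x = (x < m.+1) && (inord x \in S).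
Proof.
rewrite /natset; apply/imageP/andP => [[i i_in ->] | [x_lt x_in]].
  by rewrite ltn_ord inord_val.
by exists (inord x) => //; apply/esym/inordK.
Qed.

Lemma natset_inj m (S1 S2 : {set 'I_m.+1}) : natset S1 =1 natset S2 -> S1 = S2.
Proof.
by move=> E; apply/setP => i; have := E i; rewrite !natsetE ltn_ord inord_val.
Qed.

Lemma set_of_word_inj v1 v2 :
  size v1 = size v2 -> set_of_word v1 =1 set_of_word v2 -> v1 = v2.
Proof.
by move=> size_eq E; apply: (eq_from_nth (x0 := false) size_eq) => j _; exact: E j.+1.
Qed.

Lemma set_of_word_of_set m (S : {set 'I_m.+1}) :
  subset_of_range S -> natset S =1 set_of_word (word_of_set S).
Proof.
move=> /subsetP S_pos [|x]; rewrite natsetE /set_of_word /=.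
  by apply/negbTE/negP => /S_pos; rewrite inE /= inordK.
have [x_lt | x_ge] := ltnP x m.
  by rewrite (nth_map 0) ?size_iota // nth_iota // add0n ltnS x_lt.
by rewrite nth_default ?size_word_of_set // ltnNge ltnS x_ge.
Qed.

Lemma card_word_of_set m (S : {set 'I_m.+1}) :
  subset_of_range S -> #|S| = count id (word_of_set S).
Proof.
move=> /subsetP S_pos.
have enum_inord : enum 'I_m.+1 = map inord (iota 0 m.+1).
  rewrite -val_enum_ord -map_comp -[LHS]map_id; apply: eq_map => i /=.
  by rewrite inord_val.
rewrite cardE /enum_mem size_filter -enumT enum_inord count_map.
rewrite /word_of_set count_map.
have S0 : (inord 0 : 'I_m.+1) \in S = false.
  by apply/negbTE/negP => /S_pos; rewrite inE /= inordK.
have -> : iota 0 m.+1 = 0 :: iota (1 + 0) m by [].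
by rewrite /= {1}/preim /= S0 add0n iotaDl count_map.
Qed.

Lemma perm_words_of_sets m :
  perm_eq [seq word_of_set A | A <- index_enum {set 'I_m.+1} & subset_of_range A]
    (words [:: true; false] m).
Proof.
apply: uniq_perm; last 1 first.
- move=> v; rewrite mem_words; apply/mapP/idP => [[A _ ->]|/andP[/eqP size_v _]].
    by rewrite size_word_of_set eqxx; apply/allP => -[].
  pose A : {set 'I_m.+1} := [set i : 'I_m.+1 | set_of_word v i].
  have A_range : subset_of_range A by apply/subsetP => -[[|i] ?]; rewrite !inE.
  exists A; first by rewrite mem_filter A_range mem_index_enum.
  apply: set_of_word_inj; first by rewrite size_word_of_set.
  move=> x; rewrite -set_of_word_of_set // natsetE.
  have [x_lt | x_ge] := ltnP x m.+1; first by rewrite inE inordK.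
  by rewrite /set_of_word nth_default //= size_v.
- rewrite map_inj_in_uniq ?filter_uniq ?index_enum_uniq // => A1 A2.
  rewrite !mem_filter => /andP[A1_range _] /andP[A2_range _] A12.
  by apply: natset_inj => x; rewrite !set_of_word_of_set // A12.
- exact: words_uniq.
Qed.

Lemma size_le_sumn a : all (fun x => 0 < x) a -> size a <= sumn a.
Proof. by elim: a => //= x a IH /andP[x_gt0 /IH]; lia. Qed.

Lemma mem_composition_words m a :
  (a \in map comp_of_word (words [:: true; false] m)) = is_composition m.+1 a.
Proof.
apply/mapP/idP => [[w w_in ->] | /andP[a_pos /eqP a_sum]].
  move: w_in; rewrite mem_words => /andP[/eqP size_w _].
  by rewrite /is_composition comp_of_word_pos sumn_comp_of_word size_w eqxx.
have a_nil : a != [::] by case: a a_sum {a_pos}.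
exists (word_of_comp a); last by rewrite word_of_compK.
rewrite mem_words; apply/andP; split; last by apply/allP => -[].
by have := sumn_comp_of_word (word_of_comp a); rewrite word_of_compK // a_sum => -[->].
Qed.

Definition tuple_compositions n l : seq (seq nat) :=
  [seq map val (tval s)
  | s : l.-tuple 'I_n.+1 <- index_enum _ & is_composition n (map val s)].

Lemma size_tuple_compositions n l a : a \in tuple_compositions n l -> size a = l.
Proof. by case/mapP => s _ ->; rewrite size_map size_tuple. Qed.

Lemma mem_tuple_compositions m a :
  (a \in [seq a | l : 'I_m.+2 <- index_enum _, a <- tuple_compositions m.+1 l])
  = is_composition m.+1 a.
Proof.
apply/allpairsPdep/idP => [[l [b [_ /mapP[s] ]]] | a_comp].
  by rewrite mem_filter => /andP[s_comp _] -> ->.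
have /andP[a_pos /eqP a_sum] := a_comp.
have size_a : size a < m.+2 by rewrite ltnS -a_sum size_le_sumn.
have a_small x : x \in a -> x < m.+2.
  by move=> x_in; rewrite ltnS -a_sum (perm_sumn (perm_to_rem x_in)) /= leq_addr.
exists (Ordinal size_a), a; split; rewrite ?mem_index_enum //.
have size_inord : size (map (@inord m.+1) a) == size a by rewrite size_map.
have val_inord_a : map (@nat_of_ord m.+2 \o @inord m.+1) a = a.
  by rewrite -[RHS]map_id; apply/eq_in_map => x /a_small /inordK.
apply/mapP; exists (Tuple size_inord); last by rewrite /= -map_comp val_inord_a.
by rewrite mem_filter mem_index_enum /= -map_comp val_inord_a a_comp.
Qed.

Local Open Scope ring_scope.

Lemma big_subsets_of_range (R : nmodType) m (F : seq bool -> R) :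
  \sum_(A : {set 'I_m.+1} | subset_of_range A) F (word_of_set A)
  = \sum_(v <- words [:: true; false] m) F v.
Proof.
by rewrite -big_filter -(big_map _ xpredT); apply/perm_big/perm_words_of_sets.
Qed.

Lemma big_compositions (R : nmodType) m (G : seq nat -> R) :
  \sum_(l < m.+2) \sum_(s : l.-tuple 'I_m.+2 | is_composition m.+1 (map val s))
     G (map val s)
  = \sum_(w <- words [:: true; false] m) G (comp_of_word w).
Proof.
transitivity (\sum_(l < m.+2) \sum_(a <- tuple_compositions m.+1 l) G a).
  by apply: eq_bigr => l _; rewrite big_map big_filter.
rewrite -(big_allpairs_dep (h := fun _ a => a)) -(big_map comp_of_word xpredT G).
apply: perm_big; apply: uniq_perm => [||a]; last first.
- by rewrite mem_tuple_compositions mem_composition_words.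
- by rewrite map_inj_uniq ?words_uniq //; exact: can_inj comp_of_wordK.
apply: allpairs_uniq_dep => [||[l1 a1] [l2 a2]]; first exact: index_enum_uniq.
  move=> l _; rewrite map_inj_in_uniq ?filter_uniq ?index_enum_uniq //.
  by move=> s1 s2 _ _ /(inj_map val_inj) /val_inj.
move=> /allpairsPdep[l1' [a1' [_ a1_in [-> ->]]]].
move=> /allpairsPdep[l2' [a2' [_ a2_in [-> ->]]]] /= a12; subst a2'.
have l12 : l1' = l2'.
  apply: val_inj.
  by rewrite /= -(size_tuple_compositions a1_in) (size_tuple_compositions a2_in).
by rewrite l12.
Qed.

Definition bool_pairs : seq (bool * bool) :=
  [seq (b, c) | b <- [:: true; false], c <- [:: true; false]].

Section UnimodalCoef.
Variables (R : comRingType) (q t : R).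

(* A letter [(b, c)] at position [j] records whether [j] is a cut point of the
   composition and whether [j] belongs to the set. *)
Definition letter_weight (x : bool * bool) : R :=
  (if x.1 then t else 1) * (if x.2 then q else 1).

Lemma word_weight_zip w v : size w = size v ->
  word_weight letter_weight (zip w v) = t ^+ count id w * q ^+ count id v.
Proof.
elim: w v => [|b w IH] [|c v] //= => [_ | [/IH IHwv]].
  by rewrite /word_weight big_nil mulr1.
rewrite /word_weight big_cons -/(word_weight _ _) IHwv /letter_weight /=.
by case: b; case: c; rewrite /= ?add1n ?add0n ?exprS; ring.
Qed.

Lemma unimodal_coefE m :
  unimodal_coef q t m.+1
  = t * avoiding_weight bool_pairs letter_weight (false, false) (false, true) m.
Proof.
pose G a := \sum_(A : {set 'I_m.+1} | subset_of_range A)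
  (if unimodal a (natset A) then q ^+ #|A| * t ^+ size a else 0).
transitivity (\sum_(l < m.+2)
    \sum_(s : l.-tuple 'I_m.+2 | is_composition m.+1 (map val s)) G (map val s)).
  apply: eq_bigr => l _; apply: eq_bigr => s _; rewrite /G big_mkcondr /=.
  by apply: eq_bigr => A _; rewrite size_map size_tuple.
rewrite big_compositions /avoiding_weight [in RHS]big_mkcond -big_words_zip mulr_sumr.
apply: eq_big_seq => w.
rewrite mem_words => /andP[/eqP size_w _]; rewrite mulr_sumr /G.
pose F v := if unimodal (comp_of_word w) (set_of_word v)
  then q ^+ count id v * t ^+ size (comp_of_word w) else 0.
rewrite (eq_bigr (fun A => F (word_of_set A))); last first.
  move=> A A_range.
  by rewrite /F -(eq_unimodal _ (set_of_word_of_set A_range)) card_word_of_set.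
rewrite big_subsets_of_range big_mkcond; apply: eq_big_seq => v.
rewrite mem_words => /andP[/eqP size_v _].
rewrite /F unimodalE; last first.
  by rewrite sumn_comp_of_word /set_of_word /= nth_default ?size_w ?size_v.
rewrite locally_unimodal_words ?size_w ?size_v //; case: sorted; rewrite ?mulr0 //.
by rewrite word_weight_zip ?size_w ?size_v // size_comp_of_word exprS; ring.
Qed.

Lemma sum_letter_weight : \sum_(x <- bool_pairs) letter_weight x = (1 + q) * (1 + t).
Proof. by rewrite /bool_pairs /= !big_cons big_nil /letter_weight /=; ring. Qed.

Lemma unimodal_coef1 : unimodal_coef q t 1 = t.
Proof. by rewrite unimodal_coefE avoiding_weight0 mulr1. Qed.

Lemma unimodal_coef2 : unimodal_coef q t 2 = t * ((1 + q) * (1 + t)).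
Proof. by rewrite unimodal_coefE avoiding_weight1 sum_letter_weight. Qed.

Lemma unimodal_coefSSS m :
  unimodal_coef q t m.+3
  = (1 + q) * (1 + t) * unimodal_coef q t m.+2 - q * unimodal_coef q t m.+1.
Proof.
rewrite !unimodal_coefE avoiding_weightSS // sum_letter_weight /letter_weight /=; ring.
Qed.

End UnimodalCoef.

Lemma coef_sum_monomials (R : comRingType) (c : nat -> R) N j :
  (\sum_(1 <= n < N.+1) c n *: 'X^n)`_j = if (0 < j <= N)%N then c j else 0.
Proof.
rewrite coef_sum; under eq_bigr do rewrite coefZ coefXn.
case: ifP => j_range.
  rewrite (bigD1_seq j) /= ?iota_uniq ?mem_iota //; last by lia.
  rewrite eqxx mulr1 big1 ?addr0 // => n /negbTE; rewrite eq_sym => ->; exact: mulr0.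
rewrite big1_seq // => n; rewrite mem_iota => n_range.
have -> : (j == n) = false by apply/negbTE/eqP => j_eq; move: j_range; rewrite j_eq; lia.
exact: mulr0.
Qed.

Unset Implicit Arguments.

Theorem proposition2p1 (R : comRingType) (q t : R) (N k : nat) :
  (k <= N)%N ->
  (unimodal_den q t * \sum_(1 <= n < N.+1) unimodal_coef q t n *: 'X^n)`_k
  = (t *: 'X)`_k.
Proof.
move=> k_le; rewrite /unimodal_den mulrDl mulrBl mul1r -!scalerAl.
rewrite coefD coefB !coefZ coefXM coefXnM coefX !coef_sum_monomials.
case: k k_le => [|[|[|m]]] k_le /=.
- by rewrite !mulr0 subr0 addr0.
- by rewrite k_le unimodal_coef1 !mulr0 subr0 addr0 mulr1.
- rewrite k_le (ltnW k_le) unimodal_coef1 unimodal_coef2; ring.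
have -> : (m.+3 - 2)%N = m.+1 by lia.
rewrite k_le (ltnW k_le) (ltnW (ltnW k_le)) unimodal_coefSSS; ring.
Qed.
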